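(* For all $e,f\in\mathsf{Exp}/{\sim}$ and $v_x\in V$, $\mathsf{bd}(\mu v_x.e,\mu v_x.f)\le\mathsf{bd}(e,f)$.
   Context: Fix variables $V=\{v_1,v_2,\dots\}$ and letters $\Sigma$. Expressions: $e\in\mathsf{Exp}::=0\mid v\ (v\in V)\mid a.e\mid e+f\mid\mu v.e$ ($\mu v$ binds $v$); substitution is capture-avoiding. The prechart $(\mathsf{Exp},\partial)$: least relations with $a.e\xrightarrow{a}e$; $v\rhd v$; $e+f$ has all transitions and outputs of $e$ and of $f$; $\mu w.e\rhd v$ if $e\rhd v$, $v\ne w$; $\mu v.e\xrightarrow{a}e'[\mu v.e/v]$ if $e\xrightarrow{a}e'$. Bisimilarity $\sim$ is a congruence; $\mathsf{Exp}/{\sim}$ is a prechart via $[e]\xrightarrow{a}[e']$ iff $e\xrightarrow{a}e'$, $[e]\rhd v$ iff $e\rhd v$, with $\beta([e])=\{(a,[e'])\mid e\xrightarrow{a}e'\}\cup\{v\mid e\rhd v\}$. A 1-bounded pseudometric on $X$ is $d:X\times X\to[0,1]$ with $d(x,x)=0$, symmetry, triangle inequality, ordered pointwise. $d^\uparrow$ on $\Sigma\times X+V$: $d^\uparrow((a,x),(a,y))=\tfrac12 d(x,y)$, $0$ if equal, $1$ otherwise. $\mathcal H(d)(A,B)=\max\{\sup_{x\in A}\inf_{y\in B}d(x,y),\sup_{y\in B}\inf_{x\in A}d(y,x)\}$, $\sup\emptyset=0$, $\inf\emptyset=1$. $\mathsf{bd}$ is the least fixpoint of $d\mapsto\big((x,y)\mapsto\mathcal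 H(d^\uparrow)(\beta(x),\beta(y))\big)$ on pseudometrics on $\mathsf{Exp}/{\sim}$. *)

From Stdlib Require Import Reals List Arith ClassicalEpsilon.
From Coquelicot Require Import Coquelicot.
Import ListNotations.
Open Scope R_scope.

Set Implicit Arguments.

Section Expressions.
Variable Sigma : Type.

Inductive Exp : Type :=
| Zero : Exp
| Var : nat -> Exp
| Pre : Sigma -> Exp -> Exp
| Plus : Exp -> Exp -> Exp
| Mu : nat -> Exp -> Exp.

Fixpoint fv (e : Exp) : list nat :=
  match e with
  | Zero => []
  | Var n => [n]
  | Pre _ e => fv e
  | Plus e f => fv e ++ fv f
  | Mu v e => filter (fun x => negb (Nat.eqb x v)) (fv e)
  end.

(* Capture-avoiding simultaneous substitution: the bound variable is renamed
   to a fresh one only when it would capture a free variable. *)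
Fixpoint subst (s : nat -> Exp) (e : Exp) : Exp :=
  match e with
  | Zero => Zero
  | Var n => s n
  | Pre a e => Pre a (subst s e)
  | Plus e f => Plus (subst s e) (subst s f)
  | Mu w e =>
      let avoid := flat_map (fun y => fv (s y)) (fv (Mu w e)) in
      let z := if existsb (Nat.eqb w) avoid then S (list_max avoid) else w in
      Mu z (subst (fun y => if Nat.eqb y w then Var z else s y) e)
  end.

Definition subst1 (g : Exp) (v : nat) (e : Exp) : Exp :=
  subst (fun y => if Nat.eqb y v then g else Var y) e.

Inductive step : Exp -> Sigma -> Exp -> Prop :=
| step_pre : forall a e, step (Pre a e) a e
| step_plusl : forall e f a e', step e a e' -> step (Plus e f) a e'
| step_plusr : forall e f a f', step f a f' -> step (Plus e f) a f'
| step_mu : forall v e a e', step e a e' -> step (Mu v e) a (subst1 (Mu v e) v e').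

Inductive out : Exp -> nat -> Prop :=
| out_var : forall v, out (Var v) v
| out_plusl : forall e f v, out e v -> out (Plus e f) v
| out_plusr : forall e f v, out f v -> out (Plus e f) v
| out_mu : forall w e v, out e v -> v <> w -> out (Mu w e) v.

Definition is_bisimulation (Rel : Exp -> Exp -> Prop) : Prop :=
  forall e f, Rel e f ->
    (forall a e', step e a e' -> exists f', step f a f' /\ Rel e' f') /\
    (forall a f', step f a f' -> exists e', step e a e' /\ Rel e' f') /\
    (forall v, out e v <-> out f v).

Definition bisim (e f : Exp) : Prop :=
  exists Rel, is_bisimulation Rel /\ Rel e f.

(* The quotient Exp/~ : equivalence classes of bisimilarity. *)
Definition Q : Type := { P : Exp -> Prop | exists e, P = bisim e }.

Definition cls (e : Exp) : Q := exist _ (bisim e) (ex_intro _ e eq_refl).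

(* beta([e]) = {(a,[e']) | e -a-> e'} u {v | e |> v}, as a predicate on
   Sigma x (Exp/~) + V. *)
Definition beta (x : Q) (o : (Sigma * Q) + nat) : Prop :=
  exists e, proj1_sig x e /\
    match o with
    | inl (a, y) => exists e', step e a e' /\ y = cls e'
    | inr v => out e v
    end.

End Expressions.

Arguments Zero {Sigma}.
Arguments Var {Sigma} _.

(* sup of a set of reals, with sup(empty) = 0 (all sets used here are
   subsets of [0,1], hence bounded). *)
Definition sup0 (S : R -> Prop) : R :=
  match Lub_Rbar S with Finite r => r | _ => 0 end.

(* inf of a set of reals, with inf(empty) = 1. *)
Definition inf1 (S : R -> Prop) : R :=
  if excluded_middle_informative (exists r, S r) then
    match Glb_Rbar S with Finite r => r | _ => 1 end
  else 1.

Definition Hausdorff {T : Type} (D : T -> T -> R) (A B : T -> Prop) : R :=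
  Rmax (sup0 (fun r => exists x, A x /\ r = inf1 (fun s => exists y, B y /\ s = D x y)))
       (sup0 (fun r => exists y, B y /\ r = inf1 (fun s => exists x, A x /\ s = D y x))).

Definition pseudometric {X : Type} (d : X -> X -> R) : Prop :=
  (forall x y, 0 <= d x y <= 1) /\
  (forall x, d x x = 0) /\
  (forall x y, d x y = d y x) /\
  (forall x y z, d x z <= d x y + d y z).

Definition dup {Sigma X : Type} (d : X -> X -> R) (o1 o2 : (Sigma * X) + nat) : R :=
  match o1, o2 with
  | inl (a, x), inl (b, y) =>
      if excluded_middle_informative (a = b) then d x y / 2 else 1
  | inr v, inr w => if Nat.eq_dec v w then 0 else 1
  | _, _ => 1
  end.

Definition Phi {Sigma : Type} (d : Q Sigma -> Q Sigma -> R) : Q Sigma -> Q Sigma -> R :=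
  fun x y => Hausdorff (dup d) (beta x) (beta y).

Definition is_bd {Sigma : Type} (d : Q Sigma -> Q Sigma -> R) : Prop :=
  pseudometric d /\
  (forall x y, Phi d x y = d x y) /\
  (forall d', pseudometric d' -> (forall x y, Phi d' x y = d' x y) ->
     forall x y, d x y <= d' x y).

(* Write [X g := g[mu v.e / v]], [Y h := h[mu v.f / v]] and [c := bd(e, f)]; the
   theorem is the instance [g = h = v] of [bd(X g, Y h) <= max(bd(g, h), c)].
   A transition of [X g] either comes from a transition [g -a-> g'] of [g],
   matched by [h] up to [bd(g, h)], or from an unfolding of [mu v.e], i.e. from a
   transition of [e], matched by [f] up to [c]; in both cases the successors are
   again of the form [X g'], [Y h'] up to alpha-equivalence.  Since [d^up] halves
   the distance of successors, the fixpoint equation turns a uniform error [K]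
   in the inequality into [K/2]; starting from [K = 1], the error vanishes. *)

From Stdlib Require Import Reals List Lia Lra.
From Stdlib Require Import ClassicalEpsilon ProofIrrelevance.
From Stdlib Require Import FunctionalExtensionality PropExtensionality.
From Coquelicot Require Import Rbar Lub.

(* [subst] renames binders, so substitution commutes with composition and with
   unfolding only up to alpha-equivalence; alpha-equivalent expressions are
   bisimilar, which is all the argument needs. *)
Section AlphaEquivalence.
Context {Sg : Type}.

Definition bind_rel (r : nat -> nat -> Prop) (w w' : nat) (x y : nat) : Prop :=
  (x = w /\ y = w') \/ (x <> w /\ y <> w' /\ r x y).

(* [alpha r g h]: [g] and [h] agree up to renaming of bound variables, with
   free variables related by [r]. *)
Inductive alpha : (nat -> nat -> Prop) -> Exp Sg -> Exp Sg -> Prop :=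
| alpha_zero r : alpha r Zero Zero
| alpha_var r x y : r x y -> alpha r (Var x) (Var y)
| alpha_pre r a g h : alpha r g h -> alpha r (Pre a g) (Pre a h)
| alpha_plus r g1 g2 h1 h2 :
    alpha r g1 h1 -> alpha r g2 h2 -> alpha r (Plus g1 g2) (Plus h1 h2)
| alpha_mu r w w' g h : alpha (bind_rel r w w') g h -> alpha r (Mu w g) (Mu w' h).

Lemma in_fv_Mu (w x : nat) (g : Exp Sg) : In x (fv (Mu w g)) <-> In x (fv g) /\ x <> w.
Proof.
  simpl. rewrite filter_In. split; intros [H1 H2]; split; auto.
  - intro E; subst. rewrite Nat.eqb_refl in H2. discriminate.
  - apply Nat.eqb_neq in H2. rewrite H2. reflexivity.
Qed.

Lemma alpha_mono r (a b : Exp Sg) : alpha r a b -> forall r',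
  (forall x y, In x (fv a) -> In y (fv b) -> r x y -> r' x y) -> alpha r' a b.
Proof.
  induction 1; intros r' Hr; simpl in *.
  - constructor.
  - constructor. apply Hr; auto.
  - constructor. apply IHalpha; auto.
  - constructor; [apply IHalpha1|apply IHalpha2]; intros; apply Hr; auto;
      apply in_app_iff; auto.
  - constructor. apply IHalpha. intros x y Hx Hy [[-> ->]|[H1 [H2 H3]]].
    + left; auto.
    + right; repeat split; auto. apply Hr; auto.
      * apply filter_In; split; auto. apply Nat.eqb_neq in H1; rewrite H1; auto.
      * apply filter_In; split; auto. apply Nat.eqb_neq in H2; rewrite H2; auto.
Qed.

Lemma alpha_refl (g : Exp Sg) : forall r, (forall x, r x x) -> alpha r g g.
Proof.
  induction g; intros r Hr; constructor; auto.
  apply IHg. intros x. destruct (Nat.eq_dec x n); [left|right]; auto.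
Qed.

Lemma alpha_sym r (a b : Exp Sg) : alpha r a b -> alpha (fun x y => r y x) b a.
Proof.
  induction 1; constructor; auto.
  eapply alpha_mono; [exact IHalpha|]. intros x y _ _ [[-> ->]|[H1 [H2 H3]]].
  - left; auto.
  - right; auto.
Qed.

Lemma alpha_trans r (a b : Exp Sg) : alpha r a b -> forall s c, alpha s b c ->
  alpha (fun x z => exists y, r x y /\ s y z) a c.
Proof.
  induction 1; intros s c Hc; inversion Hc; subst; constructor; eauto.
  eapply alpha_mono; [apply IHalpha; eassumption|].
  intros x z _ _ [y [[[K1 K2]|[K1 [K2 K3]]] [[K4 K5]|[K4 [K5 K6]]]]].
  - left; auto.
  - congruence.
  - congruence.
  - right; repeat split; eauto.
Qed.

Definition aeq (a b : Exp Sg) : Prop := alpha eq a b.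

Lemma aeq_refl (a : Exp Sg) : aeq a a.
Proof. apply alpha_refl; auto. Qed.

Lemma aeq_sym (a b : Exp Sg) : aeq a b -> aeq b a.
Proof. intro H. apply alpha_sym in H. eapply alpha_mono; [exact H|]. auto. Qed.

Lemma aeq_trans (a b c : Exp Sg) : aeq a b -> aeq b c -> aeq a c.
Proof.
  intros H1 H2. eapply alpha_mono; [eapply alpha_trans; eassumption|].
  intros x z _ _ [y [-> ->]]; auto.
Qed.

End AlphaEquivalence.

Section Substitution.
Context {Sg : Type}.

Definition update (s : nat -> Exp Sg) (w : nat) (t : Exp Sg) : nat -> Exp Sg :=
  fun y => if Nat.eqb y w then t else s y.

Definition binder (s : nat -> Exp Sg) (w : nat) (g : Exp Sg) : nat :=
  let avoid := flat_map (fun y => fv (s y)) (fv (Mu w g)) in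
  if existsb (Nat.eqb w) avoid then S (list_max avoid) else w.

Lemma subst_Mu (s : nat -> Exp Sg) w g :
  subst s (Mu w g) = Mu (binder s w g) (subst (update s w (Var (binder s w g))) g).
Proof. reflexivity. Qed.

Lemma binder_fresh (s : nat -> Exp Sg) w g y u :
  In y (fv g) -> y <> w -> In u (fv (s y)) -> u <> binder s w g.
Proof.
  intros Hy Hyw Hu E. unfold binder in E.
  set (avoid := flat_map (fun y => fv (s y)) (fv (Mu w g))) in E.
  assert (Hin : In u avoid).
  { apply in_flat_map. exists y. split; auto. apply in_fv_Mu; auto. }
  destruct (existsb (Nat.eqb w) avoid) eqn:Ex.
  - assert (Hmax := proj1 (list_max_le avoid (list_max avoid)) (le_n _)).
    rewrite Forall_forall in Hmax. specialize (Hmax u Hin). lia.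
  - subst u. assert (existsb (Nat.eqb w) avoid = true).
    { apply existsb_exists. exists w. split; auto. apply Nat.eqb_refl. }
    congruence.
Qed.

Lemma subst_ext_in (g : Exp Sg) : forall s t,
  (forall x, In x (fv g) -> s x = t x) -> subst s g = subst t g.
Proof.
  induction g as [|n|a g IHg|g1 IHg1 g2 IHg2|n g IHg]; intros s t H; simpl in *.
  - reflexivity.
  - auto.
  - f_equal; auto.
  - f_equal; [apply IHg1|apply IHg2]; intros; apply H; apply in_app_iff; auto.
  - assert (Hz : binder s n g = binder t n g).
    { unfold binder. rewrite !flat_map_concat_map.
      rewrite (map_ext_in (fun y => fv (s y)) (fun y => fv (t y))); auto.
      intros x Hx. rewrite H; auto. }
    change (subst s (Mu n g) = subst t (Mu n g)). rewrite !subst_Mu, Hz. f_equal.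
    apply IHg. intros x Hx. unfold update. destruct (Nat.eqb x n) eqn:E; auto.
    apply H. apply filter_In. rewrite E. auto.
Qed.

Lemma subst_id_in (g : Exp Sg) : forall s,
  (forall x, In x (fv g) -> s x = Var x) -> subst s g = g.
Proof.
  induction g as [|n|a g IHg|g1 IHg1 g2 IHg2|n g IHg]; intros s H; simpl in *.
  - reflexivity.
  - auto.
  - f_equal; auto.
  - f_equal; [apply IHg1|apply IHg2]; intros; apply H; apply in_app_iff; auto.
  - change (subst s (Mu n g) = Mu n g). rewrite subst_Mu.
    assert (Hz : binder s n g = n).
    { unfold binder. destruct (existsb (Nat.eqb n) _) eqn:E; auto.
      apply existsb_exists in E. destruct E as [x [Hx Ex]].
      apply Nat.eqb_eq in Ex; subst x.
      apply in_flat_map in Hx. destruct Hx as [y [Hy Hn]].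
      rewrite H in Hn; auto. simpl in Hn. destruct Hn as [->|[]].
      apply in_fv_Mu in Hy. tauto. }
    rewrite Hz. f_equal. apply IHg. intros x Hx. unfold update.
    destruct (Nat.eqb x n) eqn:E. apply Nat.eqb_eq in E; subst; auto.
    apply H. apply filter_In. rewrite E. auto.
Qed.

Lemma in_fv_subst (g : Exp Sg) : forall s u,
  In u (fv (subst s g)) <-> exists y, In y (fv g) /\ In u (fv (s y)).
Proof.
  induction g as [|n|a g IHg|g1 IHg1 g2 IHg2|n g IHg]; intros s u; simpl.
  - split; [intros []|intros [y [[] _]]].
  - split; [intros H; exists n; auto|intros [y [[->|[]] H]]; auto].
  - apply IHg.
  - rewrite in_app_iff, IHg1, IHg2. split.
    + intros [[y [H1 H2]]|[y [H1 H2]]]; exists y; rewrite in_app_iff; auto.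
    + intros [y [H1 H2]]. apply in_app_iff in H1. destruct H1; [left|right]; eauto.
  - change (In u (fv (subst s (Mu n g))) <-> (exists y, In y (fv (Mu n g)) /\ In u (fv (s y)))).
    rewrite subst_Mu, in_fv_Mu, IHg. split.
    + intros [[y [Hy Hu]] Hz]. unfold update in Hu. destruct (Nat.eqb y n) eqn:E.
      * simpl in Hu. destruct Hu as [Hu|[]]; congruence.
      * exists y. split; auto. apply in_fv_Mu. split; auto. apply Nat.eqb_neq; auto.
    + intros [y [Hy Hu]]. apply in_fv_Mu in Hy. destruct Hy as [Hy Hyn]. split.
      * exists y. split; auto. unfold update. apply Nat.eqb_neq in Hyn. rewrite Hyn; auto.
      * eapply binder_fresh; eauto.
Qed.
Lemma alpha_subst r (g h : Exp Sg) : alpha r g h -> forall r2 s t,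
  (forall x y, In x (fv g) -> In y (fv h) -> r x y -> alpha r2 (s x) (t y)) ->
  alpha r2 (subst s g) (subst t h).
Proof.
  induction 1; intros r2 s t Hst; simpl in *.
  - constructor.
  - apply Hst; auto.
  - constructor. auto.
  - constructor; [apply IHalpha1|apply IHalpha2]; intros; apply Hst; auto; apply in_app_iff; auto.
  - change (alpha r2 (subst s (Mu w g)) (subst t (Mu w' h))). rewrite !subst_Mu.
    constructor. apply IHalpha. intros x y Hx Hy [[-> ->]|[H1 [H2 H3]]].
    + unfold update. rewrite !Nat.eqb_refl. constructor. left; auto.
    + unfold update. apply Nat.eqb_neq in H1. apply Nat.eqb_neq in H2. rewrite H1, H2.
      apply Nat.eqb_neq in H1. apply Nat.eqb_neq in H2.
      eapply alpha_mono.
      * apply Hst; auto; [apply in_fv_Mu|apply in_fv_Mu]; auto.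
      * intros u u' Hu Hu' Hr. right. repeat split; auto.
        -- eapply binder_fresh; eauto.
        -- eapply binder_fresh; eauto.
Qed.

Lemma subst_comp (g : Exp Sg) : forall s p,
  aeq (subst p (subst s g)) (subst (fun u => subst p (s u)) g).
Proof.
  induction g as [|n|a g IHg|g1 IHg1 g2 IHg2|n g IHg]; intros s p; simpl.
  - constructor.
  - apply aeq_refl.
  - constructor. apply IHg.
  - constructor; [apply IHg1|apply IHg2].
  - change (aeq (subst p (subst s (Mu n g))) (subst (fun u => subst p (s u)) (Mu n g))).
    rewrite !subst_Mu. constructor.
    set (z1 := binder s n g). set (s1 := update s n (Var z1)).
    set (z2 := binder p z1 (subst s1 g)).
    set (z3 := binder (fun u => subst p (s u)) n g).
    eapply alpha_mono.
    + eapply alpha_trans; [apply IHg|].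
      apply (alpha_subst eq g g (aeq_refl g) (bind_rel eq z2 z3)).
      intros x y Hx _ <-.
      unfold update at 2. destruct (Nat.eqb x n) eqn:E.
      * unfold s1, update. rewrite E. simpl. unfold update. rewrite Nat.eqb_refl.
        constructor. left; auto.
      * apply Nat.eqb_neq in E.
        assert (Hs1 : s1 x = s x) by (unfold s1, update; apply Nat.eqb_neq in E; rewrite E; auto).
        rewrite Hs1.
        assert (Hz1 : forall u, In u (fv (s x)) -> u <> z1) by (intros; eapply binder_fresh; eauto).
        rewrite (subst_ext_in (s x) (update p z1 (Var z2)) p).
        2:{ intros u Hu. unfold update. destruct (Nat.eqb u z1) eqn:E2; auto.
            apply Nat.eqb_eq in E2. exfalso. eapply Hz1; eauto. }
        apply alpha_mono with (r := eq); [apply aeq_refl|].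
        intros u u' Hu _ <-. right. repeat split; auto.
        -- unfold z2. intro Eu.
           apply in_fv_subst in Hu. destruct Hu as [y [Hy Hu]].
           assert (Hy' : In y (fv (subst s1 g)) /\ y <> z1).
           { split. apply in_fv_subst. exists x. split; auto. rewrite Hs1. auto.
             apply Hz1. auto. }
           destruct Hy'. eapply (binder_fresh p z1 (subst s1 g) y u); eauto.
        -- unfold z3. eapply binder_fresh; eauto.
    + intros x y _ _ [y' [<- H]]. exact H.
Qed.

End Substitution.

Section Transitions.
Context {Sg : Type}.

Lemma out_in_fv (g : Exp Sg) v : out g v -> In v (fv g).
Proof.
  induction 1; simpl; auto; try (apply in_app_iff; auto).
  apply filter_In. split; auto. apply Nat.eqb_neq in H0. rewrite H0; auto.
Qed.

Lemma step_fv_incl (g : Exp Sg) a g' : step g a g' -> forall u, In u (fv g') -> In u (fv g).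
Proof.
  induction 1; intros u Hu; simpl in *; auto; try (apply in_app_iff; auto).
  unfold subst1 in Hu. apply in_fv_subst in Hu. destruct Hu as [y [Hy Hu]].
  destruct (Nat.eqb y v) eqn:E.
  - exact Hu.
  - simpl in Hu. destruct Hu as [<-|[]]. apply filter_In. rewrite E. auto.
Qed.

Lemma subst_subst1_Mu (s : nat -> Exp Sg) w g0 g0' x :
  (forall u, In u (fv g0') -> In u (fv g0)) ->
  aeq x (subst (update s w (Var (binder s w g0))) g0') ->
  aeq (subst1 (subst s (Mu w g0)) (binder s w g0) x) (subst s (subst1 (Mu w g0) w g0')).
Proof.
  intros Hfv Hx. set (z := binder s w g0).
  unfold subst1.
  eapply aeq_trans.
  { apply (alpha_subst eq x _ Hx). intros x1 y1 _ _ <-. apply aeq_refl. }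
  eapply aeq_trans; [apply subst_comp|].
  eapply aeq_trans; [|apply aeq_sym, subst_comp].
  rewrite (subst_ext_in g0' _ (fun u => subst s (if Nat.eqb u w then Mu w g0 else Var u))).
  { apply aeq_refl. }
  intros u Hu. unfold update. destruct (Nat.eqb u w) eqn:E.
  - simpl. rewrite Nat.eqb_refl. reflexivity.
  - simpl. apply subst_id_in. intros y Hy. destruct (Nat.eqb y z) eqn:E2; auto.
    apply Nat.eqb_eq in E2. exfalso. eapply (binder_fresh s w g0 u y); eauto.
    apply Nat.eqb_neq; auto.
Qed.

Lemma step_subst_inv (g : Exp Sg) : forall s a x, step (subst s g) a x ->
  (exists g', step g a g' /\ aeq x (subst s g')) \/ (exists u, out g u /\ step (s u) a x).
Proof.
  induction g as [|n|b g IHg|g1 IHg1 g2 IHg2|n g IHg]; intros s a x Hs; simpl in *.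
  - inversion Hs.
  - right. exists n. split; auto. constructor.
  - inversion Hs; subst. left. exists g. split; [constructor|apply aeq_refl].
  - inversion Hs; subst.
    + destruct (IHg1 _ _ _ H3) as [[g' [H1 H2]]|[u [H1 H2]]].
      * left. exists g'. split; auto. constructor; auto.
      * right. exists u. split; auto. apply out_plusl; auto.
    + destruct (IHg2 _ _ _ H3) as [[g' [H1 H2]]|[u [H1 H2]]].
      * left. exists g'. split; auto. apply step_plusr; auto.
      * right. exists u. split; auto. apply out_plusr; auto.
  - change (step (subst s (Mu n g)) a x) in Hs. rewrite subst_Mu in Hs.
    inversion Hs; subst.
    destruct (IHg _ _ _ H3) as [[g' [H1 H2]]|[u [H1 H2]]].
    + left. exists (subst1 (Mu n g) n g'). split; [constructor; auto|].
      rewrite <- subst_Mu. apply subst_subst1_Mu; auto. intros; eapply step_fv_incl; eauto.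
    + unfold update in H2. destruct (Nat.eqb u n) eqn:E.
      * inversion H2.
      * right. exists u. split. { constructor; auto. apply Nat.eqb_neq; auto. }
        unfold subst1. rewrite subst_id_in; auto.
        intros y Hy. destruct (Nat.eqb y (binder s n g)) eqn:E2; auto.
        apply Nat.eqb_eq in E2. exfalso.
        eapply (binder_fresh s n g u y); eauto.
        -- eapply out_in_fv; eauto.
        -- apply Nat.eqb_neq; auto.
        -- eapply step_fv_incl; eauto.
Qed.

Lemma step_subst (g : Exp Sg) a g' : step g a g' -> forall s,
  exists x, step (subst s g) a x /\ aeq x (subst s g').
Proof.
  induction 1; intros s; simpl.
  - eexists; split; [constructor|apply aeq_refl].
  - destruct (IHstep s) as [x [H1 H2]]. exists x; split; auto. constructor; auto.
  - destruct (IHstep s) as [x [H1 H2]]. exists x; split; auto. apply step_plusr; auto.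
  - change (exists x, step (subst s (Mu v e)) a x /\ aeq x (subst s (subst1 (Mu v e) v e'))).
    destruct (IHstep (update s v (Var (binder s v e)))) as [x [H1 H2]].
    eexists. split.
    + rewrite subst_Mu. apply step_mu. exact H1.
    + rewrite <- subst_Mu. apply subst_subst1_Mu; auto. intros; eapply step_fv_incl; eauto.
Qed.

Lemma step_subst_out (g : Exp Sg) u : out g u -> forall s a x,
  step (s u) a x -> step (subst s g) a x.
Proof.
  induction 1; intros s a x Hx; simpl.
  - exact Hx.
  - constructor; auto.
  - apply step_plusr; auto.
  - change (step (subst s (Mu w e)) a x). rewrite subst_Mu.
    set (z := binder s w e).
    assert (Hxx : subst1 (Mu z (subst (update s w (Var z)) e)) z x = x).
    { unfold subst1. apply subst_id_in. intros y Hy. destruct (Nat.eqb y z) eqn:E2; auto.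
      apply Nat.eqb_eq in E2. exfalso. eapply (binder_fresh s w e v y); eauto.
      - eapply out_in_fv; eauto.
      - eapply step_fv_incl; eauto. }
    rewrite <- Hxx. apply step_mu. apply IHout.
    unfold update. apply Nat.eqb_neq in H0. rewrite H0. exact Hx.
Qed.

Lemma out_subst (g : Exp Sg) : forall s v,
  out (subst s g) v <-> exists u, out g u /\ out (s u) v.
Proof.
  induction g as [|n|b g IHg|g1 IHg1 g2 IHg2|n g IHg]; intros s v; simpl.
  - split; [intros H; inversion H|intros [u [H _]]; inversion H].
  - split; [intros H; exists n; split; auto; constructor|].
    intros [u [H1 H2]]. inversion H1; subst; auto.
  - split; [intros H; inversion H|intros [u [H _]]; inversion H].
  - split.
    + intros H; inversion H; subst.
      * apply IHg1 in H3. destruct H3 as [u [H1 H2]]. exists u. split; auto. constructor; auto.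
      * apply IHg2 in H3. destruct H3 as [u [H1 H2]].
        exists u. split; auto. apply out_plusr; auto.
    + intros [u [H1 H2]]. inversion H1; subst.
      * constructor. apply IHg1. eauto.
      * apply out_plusr. apply IHg2. eauto.
  - change (out (subst s (Mu n g)) v <-> (exists u, out (Mu n g) u /\ out (s u) v)).
    rewrite subst_Mu. split.
    + intros H; inversion H as [| | |w0 e0 v0 Ho Hne]; subst.
      apply IHg in Ho. destruct Ho as [u [H1 H2]].
      unfold update in H2. destruct (Nat.eqb u n) eqn:E.
      * inversion H2; subst. congruence.
      * exists u. split; auto. constructor; auto. apply Nat.eqb_neq; auto.
    + intros [u [H1 H2]]. inversion H1 as [| | |w0 e0 v0 Ho Hne]; subst. constructor.
      * apply IHg. exists u. split; auto. unfold update.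
        apply Nat.eqb_neq in Hne. rewrite Hne. auto.
      * intro E. eapply (binder_fresh s n g u v); eauto.
        -- eapply out_in_fv; eauto.
        -- eapply out_in_fv; eauto.
Qed.

Lemma alpha_out_sim r (g h : Exp Sg) : alpha r g h -> forall v, out g v ->
  exists v', out h v' /\ r v v'.
Proof.
  induction 1; intros v0 Ho.
  - inversion Ho.
  - inversion Ho; subst. exists y. split; auto. constructor.
  - inversion Ho.
  - inversion Ho as [|e1 f1 v1 Ho1|e1 f1 v1 Ho1|]; subst.
    + destruct (IHalpha1 _ Ho1) as [v' [H1 H2]]. exists v'. split; auto. constructor; auto.
    + destruct (IHalpha2 _ Ho1) as [v' [H1 H2]]. exists v'. split; auto. apply out_plusr; auto.
  - inversion Ho as [| | |w0 e0 v1 Ho1 Hne]; subst.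
    destruct (IHalpha _ Ho1) as [v' [H1 [[E1 E2]|[K1 [K2 K3]]]]]; [congruence|].
    exists v'. split; auto. constructor; auto.
Qed.

Lemma alpha_step_sim (g : Exp Sg) a g' : step g a g' -> forall r h, alpha r g h ->
  exists h', step h a h' /\ alpha r g' h'.
Proof.
  induction 1; intros r h Ha.
  - inversion Ha; subst. exists h0. split; auto. constructor.
  - inversion Ha as [| | |r1 g1 g2 h1 h2 A1 A2|]; subst.
    destruct (IHstep _ _ A1) as [h' [H1 H2]]. exists h'. split; auto. constructor; auto.
  - inversion Ha as [| | |r1 g1 g2 h1 h2 A1 A2|]; subst.
    destruct (IHstep _ _ A2) as [h' [H1 H2]]. exists h'. split; auto. apply step_plusr; auto.
  - inversion Ha as [| | | |r1 w w' g1 h1 A1]; subst.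
    destruct (IHstep _ _ A1) as [h' [H1 H2]]. eexists. split; [apply step_mu; exact H1|].
    unfold subst1. eapply alpha_subst; [exact H2|].
    intros x y _ _ [[-> ->]|[K1 [K2 K3]]].
    + rewrite !Nat.eqb_refl. exact Ha.
    + apply Nat.eqb_neq in K1. apply Nat.eqb_neq in K2. rewrite K1, K2. constructor; auto.
Qed.

Lemma aeq_bisim (g h : Exp Sg) : aeq g h -> bisim g h.
Proof.
  intros H. exists aeq. split; auto. intros e f Hef. split; [|split].
  - intros a e' He. destruct (alpha_step_sim _ _ _ He _ _ Hef) as [f' [H1 H2]]. eauto.
  - intros a f' Hf. apply aeq_sym in Hef.
    destruct (alpha_step_sim _ _ _ Hf _ _ Hef) as [e' [H1 H2]]. exists e'. split; auto.
    apply aeq_sym; auto.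
  - intros v. split; intros Ho.
    + destruct (alpha_out_sim _ _ _ Hef _ Ho) as [v' [H1 <-]]; auto.
    + apply aeq_sym in Hef. destruct (alpha_out_sim _ _ _ Hef _ Ho) as [v' [H1 <-]]; auto.
Qed.

End Transitions.

Section Bisimilarity.
Context {Sg : Type}.

Lemma bisim_refl (e : Exp Sg) : bisim e e.
Proof.
  exists eq. split; auto. intros x y <-. split; [|split]; eauto. tauto.
Qed.

Lemma bisim_sym (e f : Exp Sg) : bisim e f -> bisim f e.
Proof.
  intros [Rel [HB HR]]. exists (fun x y => Rel y x). split; auto.
  intros x y Hxy. destruct (HB _ _ Hxy) as [H1 [H2 H3]]. split; [|split].
  - intros a x' Hx. destruct (H2 _ _ Hx) as [y' [? ?]]; eauto.
  - intros a y' Hy. destruct (H1 _ _ Hy) as [x' [? ?]]; eauto.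
  - intros v. rewrite H3. tauto.
Qed.

Lemma bisim_trans (e f g : Exp Sg) : bisim e f -> bisim f g -> bisim e g.
Proof.
  intros [R1 [B1 H1]] [R2 [B2 H2]].
  exists (fun x z => exists y, R1 x y /\ R2 y z). split; eauto.
  intros x z [y [Hxy Hyz]]. destruct (B1 _ _ Hxy) as [A1 [A2 A3]].
  destruct (B2 _ _ Hyz) as [C1 [C2 C3]]. split; [|split].
  - intros a x' Hx. destruct (A1 _ _ Hx) as [y' [Hy Ry]].
    destruct (C1 _ _ Hy) as [z' [Hz Rz]]. eauto.
  - intros a z' Hz. destruct (C2 _ _ Hz) as [y' [Hy Ry]].
    destruct (A2 _ _ Hy) as [x' [Hx Rx]]. eauto.
  - intros v. rewrite A3. auto.
Qed.

Lemma cls_eq (e e' : Exp Sg) : bisim e e' -> cls e = cls e'.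
Proof.
  intros H. unfold cls. apply subset_eq_compat.
  apply functional_extensionality. intros x. apply propositional_extensionality.
  split; intros Hx.
  - eapply bisim_trans; [apply bisim_sym; exact H|exact Hx].
  - eapply bisim_trans; eauto.
Qed.

Lemma beta_step (x : Exp Sg) a q :
  beta (cls x) (inl (a, q)) <-> exists x', step x a x' /\ q = cls x'.
Proof.
  split.
  - intros [e [He [e' [Hs ->]]]]. simpl in He.
    destruct He as [Rel [HB HR]]. destruct (HB _ _ HR) as [_ [H2 _]].
    destruct (H2 _ _ Hs) as [x' [Hx Rx]]. exists x'. split; auto.
    apply cls_eq. apply bisim_sym. exists Rel; auto.
  - intros [x' [Hs ->]]. exists x. split; [apply bisim_refl|]. eauto.
Qed.

Lemma beta_out (x : Exp Sg) v : beta (cls x) (inr v) <-> out x v.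
Proof.
  split.
  - intros [e [He Ho]]. simpl in He.
    destruct He as [Rel [HB HR]]. destruct (HB _ _ HR) as [_ [_ H3]]. apply H3; auto.
  - intros Ho. exists x. split; [apply bisim_refl|]. auto.
Qed.

End Bisimilarity.

Open Scope R_scope.

Lemma sup0_ub (P : R -> Prop) r B : P r -> (forall s, P s -> s <= B) -> r <= sup0 P.
Proof.
  intros Hr HB. unfold sup0. destruct (Lub_Rbar_correct P) as [Hub Hl].
  assert (H1 := Hub r Hr).
  assert (H2 : Rbar_le (Lub_Rbar P) B) by (apply Hl; intros s Hs; simpl; apply HB; auto).
  destruct (Lub_Rbar P); simpl in *; auto; contradiction.
Qed.

Lemma sup0_lub (P : R -> Prop) b : (forall s, P s -> s <= b) -> 0 <= b -> sup0 P <= b.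
Proof.
  intros HB Hb. unfold sup0. destruct (Lub_Rbar_correct P) as [Hub Hl].
  assert (H2 : Rbar_le (Lub_Rbar P) b) by (apply Hl; intros s Hs; simpl; apply HB; auto).
  destruct (Lub_Rbar P); simpl in *; auto; contradiction.
Qed.

Lemma inf1_lb (P : R -> Prop) s : P s -> (forall s, P s -> 0 <= s) -> inf1 P <= s.
Proof.
  intros Hs H0. unfold inf1. destruct (excluded_middle_informative _) as [_|n]; [|exfalso; eauto].
  destruct (Glb_Rbar_correct P) as [Hlb Hg].
  assert (H1 := Hlb s Hs).
  assert (H2 : Rbar_le 0 (Glb_Rbar P)) by (apply Hg; intros t Ht; simpl; apply H0; auto).
  destruct (Glb_Rbar P); simpl in *; auto; contradiction.
Qed.

Lemma inf1_lt (P : R -> Prop) r : inf1 P < r -> (exists s, P s /\ s < r) \/ 1 < r.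
Proof.
  intros Hr. unfold inf1 in Hr. destruct (excluded_middle_informative _) as [Ex|n]; [|right; auto].
  left. apply Classical_Prop.NNPP. intros Hn.
  destruct (Glb_Rbar_correct P) as [Hlb Hg].
  assert (H2 : Rbar_le r (Glb_Rbar P)).
  { apply Hg. intros t Ht. simpl. apply Rnot_lt_le. intro Hlt. apply Hn. eauto. }
  destruct Ex as [s Hs]. assert (H1 := Hlb s Hs).
  destruct (Glb_Rbar P); simpl in *; try contradiction. lra.
Qed.

Lemma inf1_ge (P : R -> Prop) b : (forall s, P s -> b <= s) -> b <= 1 -> b <= inf1 P.
Proof.
  intros HB H1. unfold inf1. destruct (excluded_middle_informative _) as [[s Hs]|n]; auto.
  destruct (Glb_Rbar_correct P) as [Hlb Hg].
  assert (H2 : Rbar_le b (Glb_Rbar P)) by (apply Hg; intros t Ht; simpl; apply HB; auto).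
  assert (H3 := Hlb s Hs).
  destruct (Glb_Rbar P); simpl in *; auto; contradiction.
Qed.

Lemma inf1_le1 (P : R -> Prop) : (forall s, P s -> 0 <= s <= 1) -> inf1 P <= 1.
Proof.
  intros H. destruct (Classical_Prop.classic (exists s, P s)) as [[s Hs]|n].
  - apply Rle_trans with s; [apply inf1_lb; auto; intros; apply H; auto|apply H; auto].
  - unfold inf1. destruct (excluded_middle_informative _) as [E|_]; [contradiction|lra].
Qed.

Lemma Hausdorff_ge_inf1 {T} (D : T -> T -> R) (A B : T -> Prop) o :
  (forall x y, 0 <= D x y <= 1) -> A o ->
  inf1 (fun s => exists y, B y /\ s = D o y) <= Hausdorff D A B.
Proof.
  intros HD Ho. unfold Hausdorff. eapply Rle_trans; [|apply Rmax_l].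
  apply sup0_ub with (B := 1); [eauto|].
  intros s [x [_ ->]]. apply inf1_le1. intros t [y [_ ->]]. auto.
Qed.

Lemma Hausdorff_le {T} (D : T -> T -> R) (A B : T -> Prop) b :
  (forall x y, 0 <= D x y <= 1) -> 0 <= b ->
  (forall eps, 0 < eps -> forall x, A x -> exists y, B y /\ D x y <= b + eps) ->
  (forall eps, 0 < eps -> forall y, B y -> exists x, A x /\ D y x <= b + eps) ->
  Hausdorff D A B <= b.
Proof.
  intros HD Hb H1 H2.
  assert (He : forall eps, 0 < eps -> Hausdorff D A B <= b + eps).
  { intros eps Heps. unfold Hausdorff. apply Rmax_lub.
    - apply sup0_lub; [|lra]. intros s [x [Hx ->]].
      destruct (H1 eps Heps x Hx) as [y [Hy Hd]].
      eapply Rle_trans; [apply inf1_lb; [eauto|]|exact Hd].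
      intros t [y' [_ ->]]. apply HD.
    - apply sup0_lub; [|lra]. intros s [y [Hy ->]].
      destruct (H2 eps Heps y Hy) as [x [Hx Hd]].
      eapply Rle_trans; [apply inf1_lb; [eauto|]|exact Hd].
      intros t [y' [_ ->]]. apply HD. }
  destruct (Rle_dec (Hausdorff D A B) b) as [ok|nok]; auto.
  specialize (He ((Hausdorff D A B - b)/2)). lra.
Qed.

Lemma Rle_of_le_plus_pow_half (a b : R) : (forall n, a <= b + (/ 2) ^ n) -> a <= b.
Proof.
  intros H. apply Rnot_lt_le. intros Hlt.
  assert (Hhalf : Rabs (/ 2) < 1) by (rewrite Rabs_pos_eq; lra).
  destruct (pow_lt_1_zero (/ 2) Hhalf (a - b)) as [N HN]; [lra|].
  specialize (HN N (le_n N)). specialize (H N).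
  pose proof (Rle_abs ((/ 2) ^ N)). lra.
Qed.

Lemma dup_bounded {Sg X : Type} (d : X -> X -> R) : (forall x y, 0 <= d x y <= 1) ->
  forall o o' : Sg * X + nat, 0 <= dup d o o' <= 1.
Proof.
  intros Hb [[a x]|v] [[b y]|w]; simpl; try lra.
  - destruct (excluded_middle_informative _); [specialize (Hb x y)|]; lra.
  - destruct (Nat.eq_dec v w); lra.
Qed.

Section BehaviouralDistance.
Context {Sg : Type} (bd : Q Sg -> Q Sg -> R).
Hypothesis bd_lfp : is_bd bd.

Definition bdist (x y : Exp Sg) : R := bd (cls x) (cls y).

Lemma bdist_bounded x y : 0 <= bdist x y <= 1.
Proof. destruct bd_lfp as [[Hb _] _]. apply Hb. Qed.

Lemma bdist_sym x y : bdist x y = bdist y x.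
Proof. destruct bd_lfp as [[_ [_ [Hs _]]] _]. apply Hs. Qed.

Lemma bdist_aeq x x' y y' : aeq x x' -> aeq y y' -> bdist x y = bdist x' y'.
Proof.
  intros H1 H2. unfold bdist.
  now rewrite (cls_eq _ _ (aeq_bisim _ _ H1)), (cls_eq _ _ (aeq_bisim _ _ H2)).
Qed.

Lemma bdist_fixpoint x y : bdist x y = Hausdorff (dup bd) (beta (cls x)) (beta (cls y)).
Proof. destruct bd_lfp as [_ [Hf _]]. unfold bdist. now rewrite <- Hf. Qed.

Lemma dup_bd_bounded (o o' : Sg * Q Sg + nat) : 0 <= dup bd o o' <= 1.
Proof. apply dup_bounded. destruct bd_lfp as [[Hb _] _]. exact Hb. Qed.

Lemma bdist_step_match (x y x' : Exp Sg) a eps :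
  bdist x y < 1 -> step x a x' -> 0 < eps ->
  exists y', step y a y' /\ bdist x' y' / 2 < bdist x y + eps.
Proof.
  intros Hlt Hs Heps.
  set (eps' := Rmin eps (1 - bdist x y)).
  assert (He1 : 0 < eps') by (unfold eps'; apply Rmin_glb_lt; lra).
  assert (He2 : eps' <= eps) by apply Rmin_l.
  assert (He3 : eps' <= 1 - bdist x y) by apply Rmin_r.
  assert (Hb : beta (cls x) (inl (a, cls x'))) by (apply beta_step; eauto).
  pose proof (Hausdorff_ge_inf1 (dup bd) _ (beta (cls y)) _ dup_bd_bounded Hb) as Hge.
  rewrite <- bdist_fixpoint in Hge.
  destruct (inf1_lt (fun s => exists o, beta (cls y) o /\ s = dup bd (inl (a, cls x')) o)
              (bdist x y + eps') ltac:(lra)) as [[s [[o' [Ho' ->]] Hs']]|H1]; [|lra].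
  destruct o' as [[b q]|w]; simpl in Hs'; [|lra].
  destruct (excluded_middle_informative _) as [<-|ne]; [|lra].
  apply beta_step in Ho'. destruct Ho' as [y' [Hy ->]]. exists y'. split; auto.
  change (bd (cls x') (cls y')) with (bdist x' y') in Hs'. lra.
Qed.

Lemma bdist_out_match (x y : Exp Sg) v : bdist x y < 1 -> out x v -> out y v.
Proof.
  intros Hlt Ho. apply Classical_Prop.NNPP. intros Hn.
  assert (Hb : beta (cls x) (inr v)) by (apply beta_out; auto).
  pose proof (Hausdorff_ge_inf1 (dup bd) _ (beta (cls y)) _ dup_bd_bounded Hb) as Hge.
  rewrite <- bdist_fixpoint in Hge.
  assert (1 <= inf1 (fun s => exists o', beta (cls y) o' /\ s = dup bd (inr v) o')).
  { apply inf1_ge; [|lra]. intros s [o' [Ho' ->]]. destruct o' as [[b q]|w]; simpl; [lra|].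
    destruct (Nat.eq_dec v w) as [<-|]; [|lra]. apply beta_out in Ho'. contradiction. }
  lra.
Qed.

Definition unfold_bounded (e f : Exp Sg) (v : nat) (K : R) : Prop :=
  forall g h, bdist (subst1 (Mu v e) v g) (subst1 (Mu v f) v h)
              <= Rmax (bdist g h) (bdist e f) + K.

Lemma unfold_bounded_sym e f v K : unfold_bounded e f v K -> unfold_bounded f e v K.
Proof. intros HK g h. rewrite bdist_sym, (bdist_sym g h), (bdist_sym f e). apply HK. Qed.

Lemma unfold_bounded_one e f v : unfold_bounded e f v 1.
Proof.
  intros g h. pose proof (bdist_bounded (subst1 (Mu v e) v g) (subst1 (Mu v f) v h)).
  pose proof (bdist_bounded g h). pose proof (Rmax_l (bdist g h) (bdist e f)). lra.
Qed.

Lemma unfold_step_match e f v K : unfold_bounded e f v K ->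
  forall g h, bdist g h < 1 -> bdist e f < 1 ->
  forall a x, step (subst1 (Mu v e) v g) a x -> forall eps, 0 < eps ->
  exists y, step (subst1 (Mu v f) v h) a y /\
    bdist x y / 2 <= Rmax (bdist g h) (bdist e f) + K / 2 + eps.
Proof.
  intros HK g h Hgh Hef a x Hs eps Heps.
  pose proof (bdist_bounded e f). pose proof (bdist_bounded g h).
  unfold subst1 in Hs. apply step_subst_inv in Hs.
  destruct Hs as [[g' [Hg' Hx]]|[u [Hu Hs]]].
  - destruct (bdist_step_match g h g' a eps Hgh Hg' Heps) as [h' [Hh' Hd]].
    destruct (step_subst h a h' Hh' (fun y => if Nat.eqb y v then Mu v f else Var y))
      as [y [Hy Hya]].
    exists y. split; [exact Hy|].
    rewrite (bdist_aeq x (subst1 (Mu v e) v g') y (subst1 (Mu v f) v h')); auto.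
    specialize (HK g' h'). unfold Rmax in *. repeat destruct (Rle_dec _ _); lra.
  - destruct (Nat.eqb u v) eqn:E; [|inversion Hs].
    apply Nat.eqb_eq in E; subst u.
    inversion Hs as [| | |v0 e0 a0 e' He]; subst.
    destruct (bdist_step_match e f e' a eps Hef He Heps) as [f' [Hf' Hd]].
    exists (subst1 (Mu v f) v f'). split.
    + unfold subst1. apply step_subst_out with (u := v).
      * eapply bdist_out_match; eauto.
      * rewrite Nat.eqb_refl. apply step_mu; auto.
    + specialize (HK e' f'). unfold Rmax in *. repeat destruct (Rle_dec _ _); lra.
Qed.

Lemma unfold_out_match (e f : Exp Sg) v g h w : bdist g h < 1 -> bdist e f < 1 ->
  out (subst1 (Mu v e) v g) w -> out (subst1 (Mu v f) v h) w.
Proof.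
  intros Hgh Hef Ho. unfold subst1 in *. apply out_subst in Ho.
  destruct Ho as [u [Hu Ho]]. apply out_subst.
  destruct (Nat.eqb u v) eqn:E.
  - apply Nat.eqb_eq in E; subst u. exists v. split; [eapply bdist_out_match; eauto|].
    rewrite Nat.eqb_refl. inversion Ho as [| | |w0 e0 v0 Ho1 Hne]; subst.
    constructor; auto. eapply bdist_out_match; eauto.
  - inversion Ho; subst. exists w. split; [eapply bdist_out_match; eauto|].
    rewrite E. constructor.
Qed.

Lemma unfold_bounded_half e f v K : 0 <= K ->
  unfold_bounded e f v K -> unfold_bounded e f v (K / 2).
Proof.
  intros HK0 HK g h.
  set (b := Rmax (bdist g h) (bdist e f) + K / 2).
  pose proof (Rmax_l (bdist g h) (bdist e f)). pose proof (Rmax_r (bdist g h) (bdist e f)).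
  pose proof (bdist_bounded (subst1 (Mu v e) v g) (subst1 (Mu v f) v h)).
  destruct (Rlt_dec (bdist g h) 1) as [Hgh|]; [|unfold b; lra].
  destruct (Rlt_dec (bdist e f) 1) as [Hef|]; [|unfold b; lra].
  assert (Hhg : bdist h g < 1) by (rewrite bdist_sym; auto).
  assert (Hfe : bdist f e < 1) by (rewrite bdist_sym; auto).
  pose proof (bdist_bounded g h).
  rewrite bdist_fixpoint. apply Hausdorff_le; [apply dup_bd_bounded|unfold b; lra| |].
  - intros eps Heps [[a q]|w] Ho.
    + apply beta_step in Ho. destruct Ho as [x [Hx ->]].
      destruct (unfold_step_match e f v K HK g h Hgh Hef a x Hx eps Heps) as [y [Hy Hd]].
      exists (inl (a, cls y)). split; [apply beta_step; eauto|].
      simpl. destruct (excluded_middle_informative _) as [_|n]; [|congruence].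
      change (bd (cls x) (cls y)) with (bdist x y). unfold b. lra.
    + apply beta_out in Ho. exists (inr w). split.
      * apply beta_out. eapply unfold_out_match; eauto.
      * simpl. destruct (Nat.eq_dec w w); [|congruence]. unfold b. lra.
  - intros eps Heps [[a q]|w] Ho.
    + apply beta_step in Ho. destruct Ho as [y [Hy ->]].
      destruct (unfold_step_match f e v K (unfold_bounded_sym e f v K HK)
                  h g Hhg Hfe a y Hy eps Heps) as [x [Hx Hd]].
      exists (inl (a, cls x)). split; [apply beta_step; eauto|].
      simpl. destruct (excluded_middle_informative _) as [_|n]; [|congruence].
      change (bd (cls y) (cls x)) with (bdist y x).
      rewrite (bdist_sym h g), (bdist_sym f e) in Hd. unfold b. lra.
    + apply beta_out in Ho. exists (inr w). split.
      * apply beta_out. eapply unfold_out_match; eauto.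
      * simpl. destruct (Nat.eq_dec w w); [|congruence]. unfold b. lra.
Qed.

Lemma unfold_bounded_zero e f v : unfold_bounded e f v 0.
Proof.
  assert (Hn : forall n, unfold_bounded e f v ((/ 2) ^ n)).
  { induction n as [|n IHn]; [apply unfold_bounded_one|].
    replace ((/ 2) ^ S n) with ((/ 2) ^ n / 2) by (simpl; field).
    apply unfold_bounded_half; [apply pow_le; lra|exact IHn]. }
  intros g h. rewrite Rplus_0_r. apply Rle_of_le_plus_pow_half. intros n. apply Hn.
Qed.

End BehaviouralDistance.

Theorem mainTheorem14 :
  forall (Sigma : Type) (bd : Q Sigma -> Q Sigma -> R), is_bd bd ->
  forall (e f : Exp Sigma) (vx : nat),
    bd (cls (Mu vx e)) (cls (Mu vx f)) <= bd (cls e) (cls f).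
Proof.
  intros Sigma bd Hbd e f v.
  pose proof (bdist_bounded bd Hbd e f) as Hef.
  pose proof (unfold_bounded_zero bd Hbd e f v (Var v) (Var v)) as H.
  unfold bdist, subst1 in *. simpl in H. rewrite Nat.eqb_refl in H.
  destruct Hbd as [[_ [Hrefl _]] _]. rewrite Hrefl, Rmax_right, Rplus_0_r in H; lra.
Qed.
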